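(* Every cartesian category $(\mathcal C,\times,1)$, viewed as a discard category with $\top_A:A\to 1$ the unique morphism to the terminal object, is pseudo-purifiable. Moreover, for every $f\in\mathcal C(A,B)$ the pairing $\langle f,\mathrm{id}_A\rangle\in\mathcal C(A,B\times A)$ is a pseudo-purification of $f$.
   Context: A discard category is a symmetric monoidal category with, for each object $A$, a morphism $\top_A:A\to I$ with $\top_I=\mathrm{id}_I$ and $\top_{A\otimes B}=\top_A\otimes\top_B$; $f:A\to B$ is causal if $\top_B\circ f=\top_A$. A morphism $p\in\mathcal C(A,B\otimes X)$ is a pseudo-purification of $f\in\mathcal C(A,B)$, written $p\in\mathrm{Pure}(f)$, if for every object $Y$ and every $g\in\mathcal C(A,B\otimes Y)$ with $f=(\mathrm{id}_B\otimes\top_Y)\circ g$ there is a causal $c\in\mathcal C(X,Y)$ with $g=(\mathrm{id}_B\otimes c)\circ p$. The category is pseudo-purifiable if every morphism has a pseudo-purification and, for all $f_1\in\mathcal C(A_1,B_1\otimes C)$, $f_2\in\mathcal C(C\otimes A_2,B_2)$, $p_1\in\mathrm{Pure}(f_1)$ with $p_1:A_1\to B_1\otimes C\otimes X_1$ and $p_2\in\mathrm{Pure}(f_2)$ with $p_2:C\otimes A_2\to B_2\otimes X_2$, the morphism $(\mathrm{id}_{B_1\otimes B_2}\otimes\sigma_{X_2,X_1})\circ(\mathrm{id}_{B_1}\otimes p_2\otimes\mathrm{id}_{X_1})\circ(\mathrm{id}_{B_1\otimes C}\otimes\sigma_{X_1,A_2})\circ(p_1\otimes\mathrm{id}_{A_2})$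 is a pseudo-purification of $(\mathrm{id}_{B_1}\otimes f_2)\circ(f_1\otimes\mathrm{id}_{A_2})$ (here $\sigma$ is the symmetry). *)

Record CartCat : Type := {
  ob :> Type;
  hom : ob -> ob -> Type;
  idm : forall A : ob, hom A A;
  comp : forall A B C : ob, hom B C -> hom A B -> hom A C;
  comp_id_l : forall A B (f : hom A B), comp A B B (idm B) f = f;
  comp_id_r : forall A B (f : hom A B), comp A A B f (idm A) = f;
  comp_assoc : forall A B C D (f : hom A B) (g : hom B C) (h : hom C D),
      comp A C D h (comp A B C g f) = comp A B D (comp B C D h g) f;
  one : ob;
  bang : forall A : ob, hom A one;
  bang_unique : forall A (f : hom A one), f = bang A;
  prod : ob -> ob -> ob;
  p1 : forall A B : ob, hom (prod A B) A;
  p2 : forall A B : ob, hom (prod A B) B;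
  pair : forall D A B : ob, hom D A -> hom D B -> hom D (prod A B);
  pair_p1 : forall D A B (f : hom D A) (g : hom D B),
      comp D (prod A B) A (p1 A B) (pair D A B f g) = f;
  pair_p2 : forall D A B (f : hom D A) (g : hom D B),
      comp D (prod A B) B (p2 A B) (pair D A B f g) = g;
  pair_unique : forall D A B (f : hom D A) (g : hom D B) (h : hom D (prod A B)),
      comp D (prod A B) A (p1 A B) h = f ->
      comp D (prod A B) B (p2 A B) h = g -> h = pair D A B f g
}.

Arguments hom {c} _ _.
Arguments idm {c} _.
Arguments comp {c A B C} _ _.
Arguments one {c}.
Arguments bang {c} _.
Arguments prod {c} _ _.
Arguments p1 {c A B}.
Arguments p2 {c A B}.
Arguments pair {c D A B} _ _.

Notation "g ⊚ f" := (comp g f) (at level 40, left associativity).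
Notation "A ⊗ B" := (prod A B) (at level 34, left associativity).

Section CartesianMonoidal.
Context {C : CartCat}.

Definition tens {A B A' B' : C} (f : hom A A') (g : hom B B') :
  hom (A ⊗ B) (A' ⊗ B') := pair (f ⊚ p1) (g ⊚ p2).

Definition assoc (A B D : C) : hom ((A ⊗ B) ⊗ D) (A ⊗ (B ⊗ D)) :=
  pair (p1 ⊚ p1) (pair (p2 ⊚ p1) p2).
Definition assoc_inv (A B D : C) : hom (A ⊗ (B ⊗ D)) ((A ⊗ B) ⊗ D) :=
  pair (pair p1 (p1 ⊚ p2)) (p2 ⊚ p2).

Definition sym (A B : C) : hom (A ⊗ B) (B ⊗ A) := pair p2 p1.

Definition runit (B : C) : hom (B ⊗ one) B := p1.
Definition lunit (B : C) : hom (one ⊗ B) B := p2.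

Definition top (A : C) : hom A one := bang A.

Definition causal {A B : C} (f : hom A B) : Prop := top B ⊚ f = top A.

(** The discard-category axioms (top_I = id_I, top_{A⊗B} = top_A ⊗ top_B,
    up to the unitor I ⊗ I ≅ I). *)
Definition discard_axioms : Prop :=
  top (@one C) = idm one /\
  forall A B : C, top (A ⊗ B) = lunit one ⊚ tens (top A) (top B).

Definition Pure {A B X : C} (f : hom A B) (p : hom A (B ⊗ X)) : Prop :=
  forall (Y : C) (g : hom A (B ⊗ Y)),
    f = runit B ⊚ (tens (idm B) (top Y) ⊚ g) ->
    exists c : hom X Y, causal c /\ g = tens (idm B) c ⊚ p.

(** Sequential-parallel composite (id_B1 ⊗ f2) ∘ (f1 ⊗ id_A2), with the
    associator inserted:  A1⊗A2 -> ((B1⊗C)⊗A2) -> B1⊗(C⊗A2) -> B1⊗B2. *)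
Definition seqcomp {A1 B1 Cc A2 B2 : C}
  (f1 : hom A1 (B1 ⊗ Cc)) (f2 : hom (Cc ⊗ A2) B2) : hom (A1 ⊗ A2) (B1 ⊗ B2) :=
  tens (idm B1) f2 ⊚ assoc B1 Cc A2 ⊚ tens f1 (idm A2).

(** The composite of pseudo-purifications, with B1⊗C⊗X1 read as (B1⊗C)⊗X1
    and associators inserted where the paper's (strict) notation omits them:
    A1⊗A2 --p1⊗id--> ((B1⊗C)⊗X1)⊗A2 --α--> (B1⊗C)⊗(X1⊗A2)
          --id⊗σ--> (B1⊗C)⊗(A2⊗X1) --α--> B1⊗(C⊗(A2⊗X1))
          --id⊗α⁻¹--> B1⊗((C⊗A2)⊗X1) --id⊗(p2⊗id)--> B1⊗((B2⊗X2)⊗X1)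
          --id⊗α--> B1⊗(B2⊗(X2⊗X1)) --α⁻¹--> (B1⊗B2)⊗(X2⊗X1)
          --id⊗σ--> (B1⊗B2)⊗(X1⊗X2). *)
Definition seqpure {A1 B1 Cc X1 A2 B2 X2 : C}
  (q1 : hom A1 ((B1 ⊗ Cc) ⊗ X1)) (q2 : hom (Cc ⊗ A2) (B2 ⊗ X2)) :
  hom (A1 ⊗ A2) ((B1 ⊗ B2) ⊗ (X1 ⊗ X2)) :=
  tens (idm (B1 ⊗ B2)) (sym X2 X1)
  ⊚ assoc_inv B1 B2 (X2 ⊗ X1)
  ⊚ tens (idm B1) (assoc B2 X2 X1)
  ⊚ tens (idm B1) (tens q2 (idm X1))
  ⊚ tens (idm B1) (assoc_inv Cc A2 X1)
  ⊚ assoc B1 Cc (A2 ⊗ X1)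
  ⊚ tens (idm (B1 ⊗ Cc)) (sym X1 A2)
  ⊚ assoc (B1 ⊗ Cc) X1 A2
  ⊚ tens q1 (idm A2).

Definition pseudo_purifiable : Prop :=
  (forall (A B : C) (f : hom A B), exists (X : C) (p : hom A (B ⊗ X)), Pure f p)
  /\
  (forall (A1 B1 Cc X1 A2 B2 X2 : C)
          (f1 : hom A1 (B1 ⊗ Cc)) (f2 : hom (Cc ⊗ A2) B2)
          (q1 : hom A1 ((B1 ⊗ Cc) ⊗ X1)) (q2 : hom (Cc ⊗ A2) (B2 ⊗ X2)),
      Pure f1 q1 -> Pure f2 q2 -> Pure (seqcomp f1 f2) (seqpure q1 q2)).

End CartesianMonoidal.

From Corelib Require Import ssreflect.
From Stdlib Require Import Setoid.

(** A morphism [q : A -> B ⊗ X] is a pseudo-purification of [f : A -> B]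
    exactly when two conditions hold: its marginal [p1 ∘ q] is [f], and its
    environment [p2 ∘ q : A -> X] is a split monomorphism (lemma [Pure_iff]).
    - Necessity: purify the "copying" dilation [⟨f, id_A⟩] through [q]; the
      resulting [c : X -> A] is a retraction of the environment.
    - Sufficiency: every dilation [g] factors as [(id ⊗ (p2 ∘ g ∘ r)) ∘ q],
      and causality is automatic because [1] is terminal.
    The theorem then reduces to three computations.  First, [⟨f, id_A⟩] has
    environment [id_A].  Second, the composite [seqpure q1 q2] of two
    purifications has marginal [seqcomp (p1 ∘ q1) (p1 ∘ q2)].  Third, its
    environment is retracted by [⟨r1 ∘ p1, p2 ∘ r2 ∘ p2⟩]. *)

Section Cartesian.
Context {C : CartCat}.

Lemma pair_comp (D E A B : C) (f : hom D A) (g : hom D B) (h : hom E D) :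
  pair f g ⊚ h = pair (f ⊚ h) (g ⊚ h).
Proof.
  apply: pair_unique; by rewrite comp_assoc ?pair_p1 ?pair_p2.
Qed.

Lemma pair_eta (D A B : C) (h : hom D (A ⊗ B)) : pair (p1 ⊚ h) (p2 ⊚ h) = h.
Proof. symmetry; by apply: pair_unique. Qed.

Lemma pair_id (A B : C) : pair (@p1 C A B) p2 = idm (A ⊗ B).
Proof. by rewrite -[RHS]pair_eta !comp_id_r. Qed.

End Cartesian.

(** Normal form of composites: reassociate to the right and push
    projections through pairings. *)
Hint Rewrite comp_id_l comp_id_r @pair_comp pair_p1 pair_p2 : cat.
Hint Rewrite <- comp_assoc : cat.
Ltac cat_norm := repeat (rewrite_strat (bottomup (hints cat))).
Ltac unfold_monoidal :=
  unfold seqpure, seqcomp, tens, assoc, assoc_inv, sym, runit, lunit.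

Section PseudoPurification.
Context {C : CartCat}.

(** A retraction of the environment [p2 ∘ q] cancels in front of any
    further composite, in the right-associated normal form. *)
Lemma env_retraction_cancel {A B X D : C} {r : hom X A} {q : hom A (B ⊗ X)}
    (h : hom D A) :
  r ⊚ (p2 ⊚ q) = idm A -> r ⊚ (p2 ⊚ (q ⊚ h)) = h.
Proof. by move=> retr; rewrite [p2 ⊚ _]comp_assoc comp_assoc retr comp_id_l. Qed.

(** Necessity: a pseudo-purification has marginal [f] and a split-mono
    environment, obtained by purifying the copying dilation [⟨f, id⟩]. *)
Lemma Pure_marginal_retraction (A B X : C) (f : hom A B) (q : hom A (B ⊗ X)) :
  Pure f q -> p1 ⊚ q = f /\ exists r : hom X A, r ⊚ (p2 ⊚ q) = idm A.
Proof.
  move=> pure_q.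
  have [c [_ copy]] := pure_q A (pair f (idm A))
    ltac:(unfold_monoidal; cat_norm; reflexivity).
  have marg := f_equal (fun h => p1 ⊚ h) copy.
  have env := f_equal (fun h => p2 ⊚ h) copy.
  move: marg env; rewrite /tens /=; cat_norm => marg env.
  split; first by [].
  by exists c.
Qed.

(** Sufficiency: with [r] retracting the environment, a dilation [g]
    factors through [q] via the (automatically causal) map [p2 ∘ g ∘ r]. *)
Lemma Pure_of_retraction {A B X : C} {f : hom A B} {q : hom A (B ⊗ X)}
    {r : hom X A} :
  p1 ⊚ q = f -> r ⊚ (p2 ⊚ q) = idm A -> Pure f q.
Proof.
  move=> marg retr Y g dil.
  exists (p2 ⊚ (g ⊚ r)); split; first exact: bang_unique.
  move: dil; unfold_monoidal; cat_norm => dil.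
  by rewrite retr comp_id_r marg dil pair_eta.
Qed.

Lemma Pure_iff (A B X : C) (f : hom A B) (q : hom A (B ⊗ X)) :
  Pure f q <-> p1 ⊚ q = f /\ exists r : hom X A, r ⊚ (p2 ⊚ q) = idm A.
Proof.
  split; first exact: Pure_marginal_retraction.
  by move=> [marg [r retr]]; exact: Pure_of_retraction marg retr.
Qed.

Lemma Pure_pair_id (A B : C) (f : hom A B) : Pure f (pair f (idm A)).
Proof.
  apply: (Pure_of_retraction (r := idm A)); by rewrite ?pair_p1 ?pair_p2 ?comp_id_l.
Qed.

Lemma seqpure_marginal (A1 B1 Cc X1 A2 B2 X2 : C)
    (q1 : hom A1 ((B1 ⊗ Cc) ⊗ X1)) (q2 : hom (Cc ⊗ A2) (B2 ⊗ X2)) :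
  p1 ⊚ seqpure q1 q2 = seqcomp (p1 ⊚ q1) (p1 ⊚ q2).
Proof. unfold_monoidal; cat_norm; reflexivity. Qed.

Lemma seqpure_retraction {A1 B1 Cc X1 A2 B2 X2 : C}
    {q1 : hom A1 ((B1 ⊗ Cc) ⊗ X1)} {q2 : hom (Cc ⊗ A2) (B2 ⊗ X2)}
    {r1 : hom X1 A1} {r2 : hom X2 (Cc ⊗ A2)} :
  r1 ⊚ (p2 ⊚ q1) = idm A1 -> r2 ⊚ (p2 ⊚ q2) = idm (Cc ⊗ A2) ->
  pair (r1 ⊚ p1) (p2 ⊚ (r2 ⊚ p2)) ⊚ (p2 ⊚ seqpure q1 q2) = idm (A1 ⊗ A2).
Proof.
  move=> retr1 retr2.
  unfold_monoidal; cat_norm.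
  rewrite (env_retraction_cancel _ retr1) (env_retraction_cancel _ retr2); cat_norm.
  exact: pair_id.
Qed.

Lemma Pure_seqpure (A1 B1 Cc X1 A2 B2 X2 : C)
    (f1 : hom A1 (B1 ⊗ Cc)) (f2 : hom (Cc ⊗ A2) B2)
    (q1 : hom A1 ((B1 ⊗ Cc) ⊗ X1)) (q2 : hom (Cc ⊗ A2) (B2 ⊗ X2)) :
  Pure f1 q1 -> Pure f2 q2 -> Pure (seqcomp f1 f2) (seqpure q1 q2).
Proof.
  move=> /Pure_iff [marg1 [r1 retr1]] /Pure_iff [marg2 [r2 retr2]].
  apply: Pure_of_retraction (seqpure_retraction retr1 retr2).
  by rewrite seqpure_marginal marg1 marg2.
Qed.

Lemma cartesian_discard_axioms : @discard_axioms C.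
Proof.
  split => [|A B]; rewrite /top; first by rewrite [idm _]bang_unique.
  by rewrite [_ ⊚ _]bang_unique.
Qed.

End PseudoPurification.

Theorem lemma7 (C : CartCat) :
  @discard_axioms C /\
  @pseudo_purifiable C /\
  (forall (A B : C) (f : hom A B), Pure f (pair f (idm A))).
Proof.
  split; first exact: cartesian_discard_axioms.
  split; last exact: Pure_pair_id.
  split.
  - move=> A B f; exists A, (pair f (idm A)); exact: Pure_pair_id.
  - move=> A1 B1 Cc X1 A2 B2 X2 f1 f2 q1 q2; exact: Pure_seqpure.
Qed.
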